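(* Let $(X,d)$ be a complete metric space and $(\mathbb{H}(X),h)$ the space of nonempty compact subsets of $X$ with the Hausdorff metric. For each $i\in\mathbb{N}$ let $\mathcal{F}_i=\{X; f_{1,i},\dots,f_{n_i,i}\}$ be a finite family of Lipschitz maps $f_{r,i}:X\to X$, with associated set map $\mathcal{F}_i(A)=\bigcup_{r=1}^{n_i} f_{r,i}(A)$ on $\mathbb{H}(X)$, and let $L_{\mathcal{F}_i}=\max_{1\le r\le n_i}\mathrm{Lip}(f_{r,i})$. Suppose $\lim_{k\to\infty}\prod_{i=1}^k L_{\mathcal{F}_i}=0$. Let $\Phi_k=\mathcal{F}_k\circ\cdots\circ\mathcal{F}_1$ and $\Psi_k=\mathcal{F}_1\circ\cdots\circ\mathcal{F}_k$. Then for all $A,B\in\mathbb{H}(X)$, $h(\Phi_k(A),\Phi_k(B))\to 0$ and $h(\Psi_k(A),\Psi_k(B))\to0$ as $k\to\infty$.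
   Context: The Hausdorff metric is $h(B,C)=\max\{d(B,C),d(C,B)\}$ with $d(B,C)=\sup_{b\in B}\inf_{c\in C}d(b,c)$. $\mathrm{Lip}(f)=\sup_{x\ne y}d(f(x),f(y))/d(x,y)$. *)

From HB Require Import structures.
From mathcomp Require Import all_boot all_order all_algebra.
From mathcomp Require Import all_classical all_reals all_analysis.
Set Implicit Arguments. Unset Strict Implicit. Unset Printing Implicit Defensive.
Import Order.TTheory GRing.Theory Num.Theory.
Import numFieldNormedType.Exports.
Local Open Scope classical_set_scope.
Local Open Scope ring_scope.

Section Defs.
Context {R : realType} {X : metricType R}.

Definition complete_space : Prop :=
  forall F : set_system X, ProperFilter F -> cauchy F -> exists x : X, F --> x.

Definition exc_dist (B C : set X) : R :=
  sup [set inf [set mdist b c | c in C] | b in B].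

Definition hausdorff_dist (B C : set X) : R :=
  Num.max (exc_dist B C) (exc_dist C B).

Definition lipschitz_map (f : X -> X) : Prop :=
  exists k : R, forall x y, mdist (f x) (f y) <= k * mdist x y.

Definition Lip (f : X -> X) : R :=
  sup [set q : R | exists x y : X, x <> y /\ q = mdist (f x) (f y) / mdist x y].

Definition fam_map (n : nat) (f : 'I_n -> X -> X) (A : set X) : set X :=
  \bigcup_(r in [set: 'I_n]) (f r @` A).

Definition fam_lip (n : nat) (f : 'I_n -> X -> X) : R :=
  \big[Num.max/0]_(r < n) Lip (f r).

Fixpoint Phi (F : nat -> set X -> set X) (k : nat) (A : set X) : set X :=
  if k is k'.+1 then F k (Phi F k' A) else A.

Fixpoint Psi (F : nat -> set X -> set X) (k : nat) (A : set X) : set X :=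
  if k is k'.+1 then Psi F k' (F k A) else A.

End Defs.
Arguments complete_space {R} X.

From HB Require Import structures.
From mathcomp Require Import all_boot all_order all_algebra.
From mathcomp Require Import all_classical all_reals all_analysis.
From mathcomp Require Import lra.
Import Order.TTheory GRing.Theory Num.Theory.
Import numFieldNormedType.Exports.
Local Open Scope classical_set_scope.
Local Open Scope ring_scope.

(* Each set map F_i is Lipschitz for the Hausdorff distance with constant
   L_{F_i}, since every point of f_{r,i}(B) is within L_{F_i} d(b, C) of
   f_{r,i}(C).  Composing, h(Phi_k A, Phi_k B) and h(Psi_k A, Psi_k B) are
   at most (prod_{i <= k} L_{F_i}) h(A, B), which tends to 0.  All that is
   needed of A and B is that they are nonempty and bounded, so that h is a
   finite sup of infima; this class is preserved by each F_i. *)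

Section bounded_sets.
Context {R : realType} {X : metricType R}.

Definition mbounded (A : set X) : Prop :=
  exists x0 M, forall a, A a -> mdist x0 a <= M.

Lemma continuous_mdist (x0 : X) : continuous (mdist x0).
Proof.
move=> x; apply/cvgrPdist_lt => e e_gt0.
near=> y.
have : ball x e y by near: y; exact: nbhsx_ballx.
rewrite ballEmdist /= => xy_lt.
have := metric_triangle x0 x y; have := metric_triangle x0 y x.
rewrite (metric_sym y x) ltr_norml => ? ?; apply/andP; split; lra.
Unshelve. all: by end_near.
Qed.

Lemma compact_mbounded (A : set X) : compact A -> A !=set0 -> mbounded A.
Proof.
move=> cA [x0 Ax0].
have cdA : compact (mdist x0 @` A).
  apply: continuous_compact => //; apply: continuous_subspaceT => x.
  exact: continuous_mdist.
have [_ [M ubM]] := compact_has_sup (image_nonempty _ (ex_intro _ x0 Ax0)) cdA.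
by exists x0, M => a Aa; apply: ubM; exists a.
Qed.

End bounded_sets.

Section lipschitz_constants.
Context {R : realType} {X : metricType R}.

Lemma mdist_le_Lip {g : X -> X} : lipschitz_map g ->
  forall x y, mdist (g x) (g y) <= Lip g * mdist x y.
Proof.
move=> [k gk] x y.
have [->|xy] := eqVneq x y; first by rewrite !mdistxx mulr0.
rewrite -ler_pdivrMr ?mdist_gt0 //.
apply: sup_upper_bound; last by exists x, y; split => //; apply/eqP.
split; first by exists (mdist (g x) (g y) / mdist x y), x, y; split => //; apply/eqP.
exists k => _ [u [v [uv ->]]].
by rewrite ler_pdivrMr ?mdist_gt0 //; apply/eqP.
Qed.

Lemma Lip_le_fam_lip {n} (g : 'I_n -> X -> X) r : Lip (g r) <= fam_lip g.
Proof. exact: (le_bigmax 0 (fun r => Lip (g r)) r). Qed.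

Lemma fam_lip_ge0 {n} (g : 'I_n -> X -> X) : 0 <= fam_lip g.
Proof. exact: bigmax_ge_id. Qed.

Lemma mdist_le_fam_lip {n} (g : 'I_n -> X -> X) :
  (forall r, lipschitz_map (g r)) ->
  forall r x y, mdist (g r x) (g r y) <= fam_lip g * mdist x y.
Proof.
move=> g_lip r x y; apply: le_trans (mdist_le_Lip (g_lip r) x y) _.
by rewrite ler_wpM2r ?mdist_ge0 ?Lip_le_fam_lip.
Qed.

End lipschitz_constants.

Section excess.
Context {R : realType} {X : metricType R}.

Lemma inf_mdist_le (b : X) {c : X} {C : set X} : C c ->
  inf [set mdist b c | c in C] <= mdist b c.
Proof.
move=> Cc; apply: ge_inf; last by exists c.
by exists 0 => _ [z _ <-]; exact: mdist_ge0.
Qed.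

Lemma inf_mdist_ge0 (b : X) {C : set X} : C !=set0 ->
  0 <= inf [set mdist b c | c in C].
Proof.
move=> [c Cc]; apply: lb_le_inf; first by exists (mdist b c), c.
by move=> _ [z _ <-]; exact: mdist_ge0.
Qed.

Context {B C : set X}.
Hypotheses (B0 : B !=set0) (C0 : C !=set0) (bB : mbounded B) (bC : mbounded C).

Lemma exc_dist_has_sup : has_sup [set inf [set mdist b c | c in C] | b in B].
Proof.
have [b0 Bb0] := B0; have [c0 Cc0] := C0.
have [x0 [M ubM]] := bB; have [x1 [M' ubM']] := bC.
split; first by exists (inf [set mdist b0 c | c in C]), b0.
exists (M + mdist x0 x1 + M') => _ [b Bb <-].
apply: le_trans (inf_mdist_le b Cc0) _.
have := ubM b Bb; have := ubM' c0 Cc0; have := metric_triangle x0 x1 c0.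
have := metric_triangle b x0 c0; rewrite (metric_sym b x0); lra.
Qed.

Lemma inf_mdist_le_exc_dist {b : X} : B b ->
  inf [set mdist b c | c in C] <= exc_dist B C.
Proof. by move=> Bb; apply: (sup_upper_bound exc_dist_has_sup); exists b. Qed.

Lemma exc_dist_ge0 : 0 <= exc_dist B C.
Proof.
have [b0 Bb0] := B0.
exact: le_trans (inf_mdist_ge0 b0 C0) (inf_mdist_le_exc_dist Bb0).
Qed.

End excess.

Lemma hausdorff_dist_ge0 {R : realType} {X : metricType R} (B C : set X) :
  B !=set0 -> C !=set0 -> mbounded B -> mbounded C -> 0 <= hausdorff_dist B C.
Proof. by move=> *; rewrite /hausdorff_dist le_max exc_dist_ge0. Qed.

Section fam_map_lipschitz.
Context {R : realType} {X : metricType R}.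
Context {n : nat} {g : 'I_n -> X -> X} {L : R}.
Hypotheses (n_gt0 : (0 < n)%N) (L_ge0 : 0 <= L)
  (gL : forall r x y, mdist (g r x) (g r y) <= L * mdist x y).

Lemma fam_map_neq0 {A : set X} : A !=set0 -> fam_map g A !=set0.
Proof. by move=> [a Aa]; exists (g (Ordinal n_gt0) a), (Ordinal n_gt0) => //; exists a. Qed.

Lemma fam_map_mbounded {A : set X} : mbounded A -> mbounded (fam_map g A).
Proof.
move=> [x0 [M ubM]].
exists x0, (\big[Num.max/0]_r mdist x0 (g r x0) + L * M) => _ [r _ [a Aa <-]].
apply: le_trans (metric_triangle x0 (g r x0) (g r a)) _.
apply: lerD; first exact: (le_bigmax 0 (fun r => mdist x0 (g r x0)) r).
exact: le_trans (gL r x0 a) (ler_wpM2l L_ge0 (ubM a Aa)).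
Qed.

Lemma exc_dist_fam_map {B C : set X} :
  B !=set0 -> C !=set0 -> mbounded B -> mbounded C ->
  exc_dist (fam_map g B) (fam_map g C) <= L * exc_dist B C.
Proof.
move=> B0 C0 bB bC; have [c0 Cc0] := C0.
apply: ge_sup.
  have [y By] := fam_map_neq0 B0.
  by exists (inf [set mdist y c | c in fam_map g C]), y.
move=> _ [_ [r _ [b Bb <-]] <-].
apply: le_trans (ler_wpM2l L_ge0 (inf_mdist_le_exc_dist B0 C0 bB bC Bb)).
have gC c : C c -> fam_map g C (g r c) by move=> Cc; exists r => //; exists c.
have [L0|L_gt0] := eqVneq L 0.
  rewrite L0 mul0r; apply: le_trans (inf_mdist_le (g r b) (gC c0 Cc0)) _.
  by have := gL r b c0; rewrite L0 mul0r.
have {}L_gt0 : 0 < L by rewrite lt_def L_gt0.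
rewrite -ler_pdivrMl //; apply: lb_le_inf; first by exists (mdist b c0), c0.
move=> _ [c Cc <-]; rewrite ler_pdivrMl //.
exact: le_trans (inf_mdist_le (g r b) (gC c Cc)) (gL r b c).
Qed.

Lemma hausdorff_dist_fam_map {B C : set X} :
  B !=set0 -> C !=set0 -> mbounded B -> mbounded C ->
  hausdorff_dist (fam_map g B) (fam_map g C) <= L * hausdorff_dist B C.
Proof.
move=> B0 C0 bB bC; rewrite /hausdorff_dist ge_max.
by apply/andP; split; apply: le_trans (exc_dist_fam_map _ _ _ _) _;
  rewrite // ler_wpM2l // le_max lexx ?orbT.
Qed.

End fam_map_lipschitz.

Section iterates.
Context {R : realType} {X : metricType R}.
Context {F : nat -> set X -> set X} {S : set X -> Prop}
  {d : set X -> set X -> R} {L : nat -> R}.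
Hypotheses (L_ge0 : forall i, 0 <= L i)
  (F_stable : forall i C, (0 < i)%N -> S C -> S (F i C))
  (F_lip : forall i C D, (0 < i)%N -> S C -> S D ->
     d (F i C) (F i D) <= L i * d C D).

Lemma Phi_stable k {C} : S C -> S (Phi F k C).
Proof. by elim: k => [|k IH] //= SC; apply: F_stable (IH SC). Qed.

Lemma Psi_stable k {C} : S C -> S (Psi F k C).
Proof. by elim: k C => [|k IH] C //= SC; apply/IH/F_stable. Qed.

Lemma Phi_lip k {C D} : S C -> S D ->
  d (Phi F k C) (Phi F k D) <= (\prod_(1 <= i < k.+1) L i) * d C D.
Proof.
move=> SC SD; elim: k => [|k IH] /=; first by rewrite big_geq // mul1r.
apply: le_trans (F_lip k.+1 _ _ isT (Phi_stable k SC) (Phi_stable k SD)) _.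
by rewrite big_nat_recr //= (mulrC _ (L k.+1)) -mulrA ler_wpM2l.
Qed.

Lemma Psi_lip k {C D} : S C -> S D ->
  d (Psi F k C) (Psi F k D) <= (\prod_(1 <= i < k.+1) L i) * d C D.
Proof.
elim: k C D => [|k IH] C D SC SD /=; first by rewrite big_geq // mul1r.
apply: le_trans (IH _ _ (F_stable k.+1 _ isT SC) (F_stable k.+1 _ isT SD)) _.
rewrite [in leRHS]big_nat_recr //= -mulrA ler_wpM2l ?F_lip //.
by apply: prodr_ge0 => i _.
Qed.

End iterates.

Lemma squeeze_scaled_cvg0 {R : realType} (c : R) {u v : nat -> R} :
  (forall k, 0 <= u k <= v k * c) -> v @ \oo --> 0 -> u @ \oo --> 0.
Proof.
move=> uv v0; apply: (squeeze_cvgr _ (cvg_cst 0)); first exact: nearW uv.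
by rewrite -(mul0r c); apply: cvgMr_tmp.
Qed.

Theorem mainTheorem5 (R : realType) (X : metricType R)
  (n : nat -> nat) (f : forall i : nat, 'I_(n i) -> X -> X) :
  complete_space X ->
  (forall i, (1 <= i)%N -> (0 < n i)%N) ->
  (forall i (r : 'I_(n i)), (1 <= i)%N -> lipschitz_map (f i r)) ->
  (fun k : nat => \prod_(1 <= i < k.+1) fam_lip (f i)) @ \oo --> (0 : R) ->
  forall A B : set X,
    compact A -> A !=set0 -> compact B -> B !=set0 ->
    (fun k : nat => hausdorff_dist (Phi (fun i => fam_map (f i)) k A)
                                   (Phi (fun i => fam_map (f i)) k B)) @ \oo --> (0 : R)
    /\
    (fun k : nat => hausdorff_dist (Psi (fun i => fam_map (f i)) k A)
                                   (Psi (fun i => fam_map (f i)) k B)) @ \oo --> (0 : R).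
Proof.
move=> _ n_gt0 f_lip prod_cvg0 A B cA A0 cB B0.
set F := fun i => fam_map (f i).
pose S (C : set X) := C !=set0 /\ mbounded C.
have L_ge0 i : 0 <= fam_lip (f i) by exact: fam_lip_ge0.
have fL i : (0 < i)%N -> forall r x y,
    mdist (f i r x) (f i r y) <= fam_lip (f i) * mdist x y.
  by move=> i_gt0; apply: mdist_le_fam_lip => r; apply: f_lip.
have F_stable i C : (0 < i)%N -> S C -> S (F i C).
  move=> i_gt0 [C0 bC]; split; first exact: (fam_map_neq0 (n_gt0 i i_gt0) C0).
  exact: (fam_map_mbounded (L_ge0 i) (fL i i_gt0) bC).
have F_lip i C D : (0 < i)%N -> S C -> S D ->
    hausdorff_dist (F i C) (F i D) <= fam_lip (f i) * hausdorff_dist C D.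
  move=> i_gt0 [C0 bC] [D0 bD].
  exact: (hausdorff_dist_fam_map (n_gt0 i i_gt0) (L_ge0 i) (fL i i_gt0)
    C0 D0 bC bD).
have S_dist_ge0 C D : S C -> S D -> 0 <= hausdorff_dist C D.
  by move=> [C0 bC] [D0 bD]; exact: hausdorff_dist_ge0.
have SA : S A by split; last exact: compact_mbounded.
have SB : S B by split; last exact: compact_mbounded.
split; apply: (squeeze_scaled_cvg0 (hausdorff_dist A B) _ prod_cvg0) => k.
  rewrite (Phi_lip L_ge0 F_stable F_lip) // andbT.
  by apply: S_dist_ge0; apply: (Phi_stable F_stable).
rewrite (Psi_lip L_ge0 F_stable F_lip) // andbT.
by apply: S_dist_ge0; apply: (Psi_stable F_stable).
Qed.
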